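(* Let $f(x)\in\mathbb{F}_{q^n}[x]$ be a scattered polynomial, with $q>3$ and $n>2$. Let $\kappa$ be an affine central collineation of the translation plane $\mathcal{A}_f$, and let $\lambda$ be the semilinear automorphism related to $\kappa$, written as $\lambda(x,y)=(x^{p^k},y^{p^k})A$ with $A$ nonsingular and $0\le k<ne$ ($q=p^e$). Then the field automorphism $x\mapsto x^{p^k}$ associated with $\lambda$ is the identity of $\mathbb{F}_{q^n}$. Consequently $\lambda\in H_f$.
   Context: $q=p^e$ is a prime power, $p$ prime. A $q$-polynomial $f(x)=\sum_{i=0}^{n-1}a_ix^{q^i}\in\mathbb{F}_{q^n}[x]$ is scattered if for all $y,z\in\mathbb{F}_{q^n}$, $zf(y)-yf(z)=0$ implies $y,z$ are $\mathbb{F}_q$-linearly dependent. $U_f=\{(x,f(x))\colon x\in\mathbb{F}_{q^n}\}$, $L_f=\{\langle(x,f(x))\rangle_{\mathbb{F}_{q^n}}\colon x\ne0\}$, $\mathcal{D}=\{\langle v\rangle_{\mathbb{F}_{q^n}}\colon v\in\mathbb{F}_{q^n}^2\setminus\{0\}\}$ (the Desarguesian spread). Then $\mathcal{B}_f=(\mathcal{D}\setminus L_f)\cup\{hU_f\colon h\in\mathbb{F}_{q^n}^*\}$ is a spread of the $2n$-dimensional $\mathbb{F}_q$-space $\mathbb{F}_{q^n}^2$, and $\mathcal{A}_f$ is the affine translation plane whose points are the vectors of $\mathbb{F}_{q^n}^2$ and whose lines are the cosets $v+W$, $W\in\mathcal{B}_f$ (the elements of $\mathcal{B}_f$ are its components,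 viewed also as points at infinity). A central collineation of a projective plane is a nonidentity collineation fixing some line pointwise (axis); an affine central collineation of $\mathcal{A}_f$ is a collineation whose extension to the projective closure is a central collineation with axis a proper (affine) line. Every collineation $\kappa$ of $\mathcal{A}_f$ satisfies $\kappa(v)=\lambda(v)+u$ with $u=\kappa(0)$ and $\lambda$ an additive automorphism of $\mathbb{F}_{q^n}^2$ (the semilinear automorphism related to $\kappa$); for $q>3$ it is known that $\lambda$ is $\mathbb{F}_{q^n}$-semilinear, i.e. $\lambda(x,y)=(x^{p^k},y^{p^k})A$ with $A\in\mathbb{F}_{q^n}^{2\times2}$ nonsingular. Matrices act by $(x,y)\mapsto(x,y)A$; $G_f=\{A\in\mathrm{GL}(2,q^n)\colon U_fA=U_f\}$ and $H_f=\{dA\colon d\in\mathbb{F}_{q^n}^*,A\in G_f\}$. *)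

From HB Require Import structures.
From mathcomp Require Import all_boot all_order all_algebra all_field.
Set Implicit Arguments. Unset Strict Implicit. Unset Printing Implicit Defensive.
Import Order.TTheory GRing.Theory.
Local Open Scope ring_scope.

(* Throughout: L is the finite field F_{q^n}, q = p^e, and a q-polynomial
   f(x) = \sum_{i<n} a_i x^{q^i} is given by its coefficient vector a.
   Vectors of F_{q^n}^2 are row vectors 'rV[L]_2; matrices act on the right. *)

Section Defs.
Variable L : finFieldType.
Variables (q n : nat) (a : 'I_n -> L).

Definition inFq (c : L) : Prop := c ^+ q = c.

Definition qpoly (x : L) : L := \sum_(i < n) a i * x ^+ (q ^ i).

Definition vec2 (x y : L) : 'rV[L]_2 := \row_(j < 2) (if j == 0 then x else y).

Definition Fq_dep (y z : L) : Prop :=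
  exists c d : L, inFq c /\ inFq d /\ (c != 0 \/ d != 0) /\ c * y + d * z = 0.

Definition scattered : Prop :=
  forall y z : L, z * qpoly y - y * qpoly z = 0 -> Fq_dep y z.

Definition Uf : {set 'rV[L]_2} := [set vec2 x (qpoly x) | x : L].

Definition span1 (v : 'rV[L]_2) : {set 'rV[L]_2} := [set c *: v | c : L].

Definition in_Lf (W : {set 'rV[L]_2}) : Prop :=
  exists2 x : L, x != 0 & W = span1 (vec2 x (qpoly x)).

Definition in_D (W : {set 'rV[L]_2}) : Prop :=
  exists2 v : 'rV[L]_2, v != 0 & W = span1 v.

Definition component (W : {set 'rV[L]_2}) : Prop :=
  (in_D W /\ ~ in_Lf W) \/ exists2 h : L, h != 0 & W = [set h *: u | u in Uf].

Definition translate (u : 'rV[L]_2) (W : {set 'rV[L]_2}) : {set 'rV[L]_2} :=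
  [set u + w | w in W].

Definition is_line (S : {set 'rV[L]_2}) : Prop :=
  exists u W, component W /\ S = translate u W.

Definition collineation (kappa : 'rV[L]_2 -> 'rV[L]_2) : Prop :=
  bijective kappa /\ forall S : {set 'rV[L]_2}, is_line (kappa @: S) <-> is_line S.

(* affine central collineation: a nonidentity collineation whose projective
   extension fixes pointwise some affine line u + W, i.e. it fixes every affine
   point of u + W and also the point at infinity W (kappa maps lines with
   direction W to lines with direction W). *)
Definition affine_central_collineation (kappa : 'rV[L]_2 -> 'rV[L]_2) : Prop :=
  [/\ collineation kappa,
      (exists v, kappa v != v) &
      (exists u W, [/\ component W,
                      forall v, v \in translate u W -> kappa v = v &
                      exists u', kappa @: W = translate u' W])].

Definition in_Gf (B : 'M[L]_2) : Prop :=
  B \in unitmx /\ [set u *m B | u in Uf] = Uf.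

Definition in_Hf (A : 'M[L]_2) : Prop :=
  exists d : L, exists B : 'M[L]_2, [/\ d != 0, in_Gf B & A = d *: B].

End Defs.

From Pilot Require Import Defs.
From HB Require Import structures.
From mathcomp Require Import all_boot all_order all_algebra all_field.
From mathcomp Require Import ring zify.
Set Implicit Arguments.
Unset Strict Implicit.
Unset Printing Implicit Defensive.
Import GRing.Theory.
Local Open Scope ring_scope.

(* Write sigma for x |-> x^(p^k). The semilinear part lambda of kappa fixes the direction W of
   the axis pointwise. If W is an F_{q^n}-line <v>, then c^sigma v = lambda (c v) = c v forces
   sigma = id. If W = h U_f, lambda multiplies the determinant form by det A after applying
   sigma, so g x := det(h (1, f 1), h (x, f x)) satisfies g = g^sigma det A. Now g is additive,
   nonzero because f is not F_{q^n}-linear, and its kernel lies in F_q by scatteredness; so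
   g / g z maps F_{q^n} into Fix(sigma) with kernel in F_q and q^n <= q |Fix(sigma)|. If
   sigma <> id, F_{q^n} has dimension >= 2 over Fix(sigma), i.e. |Fix(sigma)|^2 <= q^n, which
   contradicts n > 2. Once lambda is the linear map v |-> v A, it maps U_f onto a component;
   that component cannot be a line <v> since U_f is not closed under F_{q^n}-scalars, so
   U_f A = h U_f and h^-1 A lies in G_f. *)

Section Vec2.
Variable L : finFieldType.
Implicit Types (x y : L) (v : 'rV[L]_2).

Lemma vec2E v : vec2 (v 0 0) (v 0 1) = v.
Proof.
apply/rowP => j; rewrite mxE.
by case: j => [[|[|//]]] hj /=; congr (v 0 _); apply: val_inj.
Qed.

Lemma vec2_inj x y x' y' : vec2 x y = vec2 x' y' -> x = x' /\ y = y'.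
Proof. by move/rowP=> E; split; [have := E 0 | have := E 1]; rewrite !mxE. Qed.

Lemma vec2_0 : vec2 0 0 = 0 :> 'rV[L]_2.
Proof. by apply/rowP => j; rewrite !mxE; case: ifP. Qed.

Lemma vec2B x y x' y' : vec2 x y - vec2 x' y' = vec2 (x - x') (y - y').
Proof. by apply/rowP => j; rewrite !mxE; case: ifP. Qed.

Lemma vec2Z c x y : c *: vec2 x y = vec2 (c * x) (c * y).
Proof. by apply/rowP => j; rewrite !mxE; case: ifP. Qed.

Lemma map_vec2 (phi : L -> L) x y : map_mx phi (vec2 x y) = vec2 (phi x) (phi y).
Proof. by apply/rowP => j; rewrite !mxE; case: ifP. Qed.

End Vec2.

Section Cross2.
Variable R : comNzRingType.
Implicit Types v w : 'rV[R]_2.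

Definition cross2 v w : R := v 0 0 * w 0 1 - v 0 1 * w 0 0.

Lemma cross2B v w w' : cross2 v (w - w') = cross2 v w - cross2 v w'.
Proof. by rewrite /cross2 !mxE; ring. Qed.

Lemma cross2_mulmx v w (A : 'M[R]_2) :
  cross2 (v *m A) (w *m A) = cross2 v w * (A 0 0 * A 1 1 - A 0 1 * A 1 0).
Proof.
rewrite /cross2 !mxE !big_ord_recr !big_ord0 /= !add0r.
have -> : widen_ord (leqnSn 1) ord_max = 0 :> 'I_2 by apply: val_inj.
have -> : ord_max = 1 :> 'I_2 by apply: val_inj.
ring.
Qed.

Lemma cross2_map (phi : R -> R) v w :
  {morph phi : x y / x - y} -> {morph phi : x y / x * y} ->
  cross2 (map_mx phi v) (map_mx phi w) = phi (cross2 v w).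
Proof. by move=> phiB phiM; rewrite /cross2 !mxE phiB !phiM. Qed.

End Cross2.

Lemma card_le_ker_img (G H : finZmodType) (beta : G -> H) (K : {set G}) (P : {set H}) :
  {morph beta : x y / x - y} -> (forall x, beta x \in P) ->
  (forall x, beta x = 0 -> x \in K) -> (#|G| <= #|K| * #|P|)%N.
Proof.
move=> betaB betaP betaK.
pose s b := odflt 0 [pick x | beta x == b].
have sK x : beta (s (beta x)) = beta x.
  by rewrite /s; case: pickP => [y /eqP //|/(_ x)]; rewrite eqxx.
pose g x := (x - s (beta x), beta x).
have g_inj : injective g by move=> x y [] + E; rewrite E; apply: addIr.
rewrite -cardsX -[#|G|]cardsT -(card_imset _ g_inj).
apply/subset_leq_card/subsetP => _ /imsetP[x _ ->].
by rewrite inE /= betaP andbT; apply: betaK; rewrite betaB sK subrr.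
Qed.

Definition fixed_set (F : finType) (phi : F -> F) : {set F} := [set x | phi x == x].

Lemma card_fixed_expr_le (F : finFieldType) (m : nat) :
  (1 < m)%N -> (#|fixed_set (fun x : F => x ^+ m)| <= m)%N.
Proof.
move=> m_gt1.
have P0 : ('X^m - 'X : {poly F}) != 0.
  by rewrite -size_poly_eq0 size_polyDl ?size_polyXn // size_polyN size_polyX.
have := max_poly_roots P0 (rs := enum (fixed_set (fun x : F => x ^+ m))).
rewrite enum_uniq cardE size_polyDl ?size_polyXn ?size_polyN ?size_polyX //; apply=> //.
apply/allP => x; rewrite mem_enum inE => /eqP xm.
by rewrite /root !hornerE xm subrr.
Qed.

Section FixedField.
Variables (F : finFieldType) (phi : F -> F).
Hypotheses (phiB : {morph phi : x y / x - y}) (phiM : {morph phi : x y / x * y}).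

Lemma card_fixed_sq_le z : phi z != z ->
  (#|fixed_set phi| * #|fixed_set phi| <= #|F|)%N.
Proof.
move=> phiz; pose g (u : F * F) := u.1 + u.2 * z.
suff g_inj : {in setX (fixed_set phi) (fixed_set phi) &, injective g}.
  by rewrite -cardsX -(card_in_imset g_inj) max_card.
move=> [x1 y1] [x2 y2]; rewrite !inE /g /=.
move=> /andP[/eqP phix1 /eqP phiy1] /andP[/eqP phix2 /eqP phiy2].
have [<- /addIr -> //|y12 E] := eqVneq y1 y2.
have Ez : (y2 - y1) * z = x1 - x2.
  have -> : x1 = x2 + y2 * z - y1 * z by rewrite -E addrK.
  ring.
have y12' : y2 - y1 != 0 by rewrite subr_eq0 eq_sym.
have := congr1 phi Ez; rewrite phiM !phiB phix1 phix2 phiy1 phiy2 -Ez.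
by move/(mulfI y12')/eqP; rewrite (negPf phiz).
Qed.

Lemma card_le_ker_fixed (g : F -> F) (K : {set F}) (c z : F) :
  {morph g : x y / x - y} -> (forall x, g x = phi (g x) * c) -> g z != 0 ->
  (forall x, g x = 0 -> x \in K) -> (#|F| <= #|K| * #|fixed_set phi|)%N.
Proof.
move=> gB g_phi gz gK.
have gz' : phi (g z) * c != 0 by rewrite -g_phi.
pose beta x := g x / g z.
have beta_fixed x : beta x \in fixed_set phi.
  rewrite inE; apply/eqP/(mulIf gz').
  by rewrite mulrA -phiM /beta divfK // -!g_phi divfK.
apply: (@card_le_ker_img _ _ beta) => // [x y|x /eqP].
  by rewrite /beta gB mulrBl.
by rewrite mulf_eq0 invr_eq0 (negPf gz) orbF => /eqP; apply: gK.
Qed.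

End FixedField.

Lemma pchar_natX (F : fieldType) (p m : nat) : p \in [pchar F] -> [pchar F].-nat (p ^ m)%N.
Proof.
by move=> charFp; rewrite pnatX (eq_pnat _ (pcharf_eq charFp)) pnat_id ?(pcharf_prime charFp).
Qed.

Definition semilinear_map (L : finFieldType) (m : nat) (A : 'M[L]_2) (v : 'rV[L]_2) :=
  map_mx (fun x => x ^+ m) v *m A.

Lemma semilinear_mapZ (L : finFieldType) (m : nat) (A : 'M[L]_2) (c : L) (v : 'rV[L]_2) :
  semilinear_map m A (c *: v) = c ^+ m *: semilinear_map m A v.
Proof.
by rewrite /semilinear_map scalemxAl; congr (_ *m _); apply/rowP => j; rewrite !mxE exprMn.
Qed.

Section ScatteredPlane.
Variables (L : finFieldType) (p e n : nat) (a : 'I_n -> L).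
Hypotheses (p_prime : prime p) (cardL : #|L| = ((p ^ e) ^ n)%N)
  (q_gt1 : (1 < p ^ e)%N) (n_gt2 : (2 < n)%N).
Implicit Types (x y : L) (v w : 'rV[L]_2) (A : 'M[L]_2) (W : {set 'rV[L]_2}).

Local Notation q := (p ^ e)%N.
Local Notation f := (Defs.qpoly q a).
Local Notation Fq := (fixed_set (fun x : L => x ^+ q)).

Lemma pcharL : p \in [pchar L].
Proof. by apply: (@card_finPcharP _ p (e * n)) => //; rewrite expnM. Qed.

Lemma exprBpn m (x y : L) : (x - y) ^+ (p ^ m) = x ^+ (p ^ m) - y ^+ (p ^ m).
Proof. by rewrite exprDn_pchar ?exprNn_pchar ?pchar_natX ?pcharL. Qed.

Lemma qpolyB x y : f (x - y) = f x - f y.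
Proof.
rewrite /Defs.qpoly -sumrB; apply: eq_bigr => i _.
by rewrite -expnM exprBpn mulrBr.
Qed.

Lemma qpoly0 : f 0 = 0.
Proof. by have := qpolyB 0 0; rewrite !subrr. Qed.

Lemma semilinear_mapB k A v w :
  semilinear_map (p ^ k) A (v - w) = semilinear_map (p ^ k) A v - semilinear_map (p ^ k) A w.
Proof.
by rewrite /semilinear_map -mulmxBl; congr (_ *m _); apply/rowP => j; rewrite !mxE exprBpn.
Qed.

Lemma card_Fq_lt : (#|Fq| < #|L|)%N.
Proof.
apply: leq_ltn_trans (card_fixed_expr_le L q_gt1) _.
by rewrite cardL -{1}(expn1 q) ltn_exp2l //; lia.
Qed.

Lemma component_zmod_closed W : component q a W -> zmod_closed W.
Proof.
case=> [[[v _ ->] _]|[h _ ->]]; split.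
- by apply/imsetP; exists 0; rewrite ?scale0r.
- by move=> _ _ /imsetP[c _ ->] /imsetP[d _ ->]; apply/imsetP; exists (c - d); rewrite ?scalerBl.
- by apply/imsetP; exists 0; rewrite ?scaler0 //; apply/imsetP; exists 0; rewrite ?qpoly0 ?vec2_0.
move=> _ _ /imsetP[_ /imsetP[x _ ->] ->] /imsetP[_ /imsetP[y _ ->] ->].
apply/imsetP; exists (vec2 (x - y) (f (x - y))); first exact: imset_f.
by rewrite -scalerBr vec2B qpolyB.
Qed.

Hypothesis f_scattered : scattered q a.

Lemma scattered_inFq t : f t = t * f 1 -> t \in Fq.
Proof.
move=> ft.
have [c [d [c_Fq [d_Fq [cd0 ctd]]]]] : Fq_dep q t 1.
  by apply: f_scattered; rewrite mul1r ft subrr.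
have c0 : c != 0.
  apply/eqP => c0; move: ctd; rewrite c0 mul0r add0r mulr1 => d0.
  by case: cd0; rewrite ?c0 ?d0 eqxx.
have -> : t = - d / c.
  apply: (mulfI c0); rewrite mulrCA divff // mulr1.
  by apply/eqP; rewrite -addr_eq0 -[d in _ + d]mulr1 ctd.
by rewrite inE expr_div_n exprNn_pchar ?pchar_natX ?pcharL // d_Fq c_Fq.
Qed.

Lemma qpoly_not_scalar : exists z, f z != z * f 1.
Proof.
have [z fz|f_scalar] := pickP (fun z => f z != z * f 1); first by exists z.
suff : (#|L| <= #|Fq|)%N by rewrite leqNgt card_Fq_lt.
rewrite -cardsT; apply/subset_leq_card/subsetP => t _.
by apply: scattered_inFq; apply/eqP/negbFE/f_scalar.
Qed.

Lemma frobenius_trivial_of_fixed_line m A v : v != 0 ->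
  (forall c, semilinear_map m A (c *: v) = c *: v) -> forall x : L, x ^+ m = x.
Proof.
move=> v0 fixv x.
have fv : semilinear_map m A v = v by rewrite -[v in LHS]scale1r fixv scale1r.
have := fixv x; rewrite semilinear_mapZ fv => /eqP.
by rewrite -subr_eq0 -scalerBl scaler_eq0 (negPf v0) orbF subr_eq0 => /eqP.
Qed.

Lemma frobenius_trivial_of_card k :
  (#|L| <= #|Fq| * #|fixed_set (fun x : L => x ^+ (p ^ k))|)%N ->
  forall x : L, x ^+ (p ^ k) = x.
Proof.
set P := #|fixed_set (fun x : L => x ^+ (p ^ k))| => cardL_le x; apply/eqP/contraT => sigma_x.
have cardP : (P * P <= #|L|)%N.
  exact: (card_fixed_sq_le (@exprBpn k) (exprMn (p ^ k)) sigma_x).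
have cardL_qP : (#|L| <= q * P)%N.
  exact: leq_trans cardL_le (leq_mul (card_fixed_expr_le L q_gt1) (leqnn P)).
have q3 : (q ^ 3 <= #|L|)%N by rewrite cardL leq_pexp2l //; lia.
have : (#|L| * #|L| <= q * q * #|L|)%N.
  by apply: leq_trans (leq_mul cardL_qP cardL_qP) _; rewrite mulnACA leq_mul2l cardP orbT.
rewrite leq_pmul2r; last by apply: leq_trans q3; rewrite expn_gt0; lia.
by rewrite !expnS expn0 muln1 in q3; nia.
Qed.

Lemma frobenius_trivial_of_fixed_graph k A (h : L) : h != 0 ->
  (forall x, semilinear_map (p ^ k) A (h *: vec2 x (f x)) = h *: vec2 x (f x)) ->
  forall x : L, x ^+ (p ^ k) = x.
Proof.
move=> h0 fixG.
pose w x := h *: vec2 x (f x).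
pose g x := cross2 (w 1) (w x).
have gB : {morph g : x y / x - y}.
  by move=> x y; rewrite /g /w -cross2B -scalerBr vec2B qpolyB.
have g_frob x : g x = g x ^+ (p ^ k) * (A 0 0 * A 1 1 - A 0 1 * A 1 0).
  rewrite /g /w -{1}(fixG 1) -{1}(fixG x) /semilinear_map cross2_mulmx.
  by rewrite (cross2_map _ _ (@exprBpn k) (exprMn _)).
have gE x : g x = h * h * (f x - x * f 1) by rewrite /g /w /cross2 !mxE /=; ring.
have [z fz] := qpoly_not_scalar.
apply: frobenius_trivial_of_card.
apply: (card_le_ker_fixed (exprMn (p ^ k)) gB g_frob (z := z)).
  by rewrite gE !mulf_eq0 (negPf h0) subr_eq0.
by move=> x; rewrite gE => /eqP; rewrite !mulf_eq0 (negPf h0) subr_eq0 => /eqP /scattered_inFq.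
Qed.

Lemma affine_central_fixes_component kappa k A :
  affine_central_collineation q a kappa ->
  (forall v, kappa v = semilinear_map (p ^ k) A v + kappa 0) ->
  exists2 W, component q a W & forall w, w \in W -> semilinear_map (p ^ k) A w = w.
Proof.
case=> _ _ [u [W [compW fix_axis _]]] kappaE; exists W => // w Ww.
have [W0 _] := component_zmod_closed compW.
have fix_u : kappa u = u by apply: fix_axis; apply/imsetP; exists 0; rewrite ?addr0.
have fix_uw : kappa (u + w) = u + w by apply: fix_axis; apply/imsetP; exists w.
have semE v : semilinear_map (p ^ k) A v = kappa v - kappa 0 by rewrite kappaE addrK.
have -> : w = (u + w) - u by rewrite addrC addKr.
by rewrite semilinear_mapB !semE fix_u fix_uw opprB addrA subrK.
Qed.

Lemma affine_central_frobenius_trivial kappa k A :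
  affine_central_collineation q a kappa ->
  (forall v, kappa v = semilinear_map (p ^ k) A v + kappa 0) ->
  forall x : L, x ^+ (p ^ k) = x.
Proof.
move=> central kappaE.
have [W [[[v v0 ->] _]|[h h0 ->]] fixW] := affine_central_fixes_component central kappaE.
  by apply: (frobenius_trivial_of_fixed_line v0) => c; apply/fixW/imsetP; exists c.
by apply: (frobenius_trivial_of_fixed_graph h0) => x; apply/fixW/imset_f/imsetP; exists x.
Qed.

Lemma collineation_image_Uf kappa A : collineation q a kappa ->
  (forall v, kappa v = v *m A + kappa 0) ->
  exists2 W, component q a W & [set x *m A | x in Uf q a] = W.
Proof.
case=> _ line_image kappaE.
have Uf_line : is_line q a (Uf q a).
  exists 0, (Uf q a); split.
    by right; exists 1; rewrite ?oner_neq0 //; under eq_imset do rewrite scale1r; rewrite imset_id.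
  by rewrite /translate; under eq_imset do rewrite add0r; rewrite imset_id.
have [u [W [compW kappaUf]]] := (line_image _).2 Uf_line.
exists W => //; have [_ WB] := component_zmod_closed compW.
have [_ WD] := GRing.zmod_closedD (component_zmod_closed compW).
have kappa_Uf v : v \in Uf q a -> exists2 w, w \in W & kappa v = u + w.
  by move=> Uv; apply/imsetP; rewrite -/(translate u W) -kappaUf imset_f.
have [|w0 Ww0 kappa0] := kappa_Uf 0.
  by apply/imsetP; exists 0; rewrite ?qpoly0 ?vec2_0.
apply/setP => w; apply/imsetP/idP => [[v Uv ->]|Ww].
  have [w1 Ww1] := kappa_Uf v Uv; rewrite kappaE kappa0 => /(canRL (addrK _)).
  by rewrite opprD addrACA subrr add0r => ->; apply: WB.
have : kappa 0 + w \in kappa @: Uf q a by rewrite kappaUf kappa0 -addrA imset_f ?WD.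
by case/imsetP => v Uv; rewrite (kappaE v) [_ + kappa 0]addrC => /addrI ->; exists v.
Qed.

Lemma Uf_mulmx_not_span A v : A \in unitmx -> [set x *m A | x in Uf q a] != span1 v.
Proof.
move=> Aunit; apply/eqP => UfA; have [z] := qpoly_not_scalar; apply/negP; rewrite negbK.
have : vec2 1 (f 1) *m A \in span1 v by rewrite -UfA; apply/imset_f/imset_f.
case/imsetP => c _ Ec.
have : (z *: vec2 1 (f 1)) *m A \in span1 v by rewrite -scalemxAl Ec scalerA; apply: imset_f.
rewrite -UfA => /imsetP[_ /imsetP[x _ ->]] /(can_inj (mulmxK Aunit)).
by rewrite vec2Z mulr1 => /vec2_inj[-> ->].
Qed.

Lemma in_Hf_of_linear_collineation kappa A : A \in unitmx ->
  collineation q a kappa -> (forall v, kappa v = v *m A + kappa 0) -> in_Hf q a A.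
Proof.
move=> Aunit coll kappaE.
have [W [[[v _ WE] _]|[h h0 WE]] UfA] := collineation_image_Uf coll kappaE.
  by case/eqP: (Uf_mulmx_not_span v Aunit); rewrite UfA.
exists h, (h^-1 *: A); split => //; last by rewrite scalerA mulfV // scale1r.
split; first by rewrite unitmxZ // unitfE invr_eq0.
have -> : [set x *m (h^-1 *: A) | x in Uf q a] = [set h^-1 *: y | y in W].
  by rewrite -UfA -[RHS]imset_comp; apply: eq_imset => x /=; rewrite scalemxAr.
rewrite WE -[LHS]imset_comp -[RHS]imset_id; apply: eq_imset => x /=.
by rewrite scalerA mulVf // scale1r.
Qed.

End ScatteredPlane.

Theorem proposition5p2 (L : finFieldType) (p e n : nat) (a : 'I_n -> L)
  (hp : prime p) (he : (0 < e)%N) (hcard : #|L| = ((p ^ e) ^ n)%N)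
  (hq : (3 < p ^ e)%N) (hn : (2 < n)%N)
  (hscat : scattered (p ^ e) a)
  (kappa : 'rV[L]_2 -> 'rV[L]_2)
  (hkappa : affine_central_collineation (p ^ e) a kappa)
  (k : nat) (A : 'M[L]_2)
  (hk : (k < n * e)%N) (hA : A \in unitmx)
  (hlam : forall x y : L,
      kappa (vec2 x y) = vec2 (x ^+ (p ^ k)) (y ^+ (p ^ k)) *m A + kappa 0) :
  (forall x : L, x ^+ (p ^ k) = x) /\ in_Hf (p ^ e) a A.
Proof.
have q_gt1 : (1 < p ^ e)%N by apply: ltn_trans hq.
have kappaE v : kappa v = semilinear_map (p ^ k) A v + kappa 0.
  by rewrite -{1}(vec2E v) hlam -(map_vec2 (fun x => x ^+ (p ^ k))) vec2E.
have frob_id := affine_central_frobenius_trivial hp hcard q_gt1 hn hscat hkappa kappaE.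
split=> //; case: hkappa => coll _ _.
apply: (in_Hf_of_linear_collineation hp hcard q_gt1 hn hscat hA coll) => v.
rewrite kappaE /semilinear_map; congr (_ *m _ + _).
by apply/rowP => j; rewrite mxE frob_id.
Qed.
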